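(* Consider a family of meshes with $\mathbb h\to0$ and stencil sizes satisfying (K1)–(K3). For every $x\in\Omega$ and every bounded $\phi:\overline\Omega\to\mathbb R$ with $\phi|_\Omega\in C^4(\Omega)$, $$\limsup_{\mathbb h\to0,\ y\to x,\ \xi\to0}\frac{S(\mathbb h,y,\phi(y)+\xi,\phi+\xi)}{\mathbb h}\le H(D^2\phi(x),f(x)),\qquad \liminf_{\mathbb h\to0,\ y\to x,\ \xi\to0}\frac{S(\mathbb h,y,\phi(y)+\xi,\phi+\xi)}{\mathbb h}\ge H(D^2\phi(x),f(x)).$$
   Context: Standing setting: $d\ge2$, $\Omega\subset\mathbb R^d$ a bounded open strictly convex domain, $f:\Omega\to[0,\infty)$ bounded and continuous, $g:\partial\Omega\to\mathbb R$ bounded and continuous. $\mathbb S$: real symmetric $d\times d$ matrices; $\mathbb S_+$: positive semidefinite ones; $\mathbb S_1=\{B\in\mathbb S_+:\operatorname{tr}B=1\}$; $A:B=\operatorname{tr}(A^TB)$; $H(A,f)=\sup_{B\in\mathbb S_1}(-B:A+f\sqrt[d]{\det B})$ for $A\in\mathbb S$, $f\ge0$. Mesh: $\mathcal T_h$ is a shape-regular simplicial partition whose union $\Omega_h$ satisfies $\Omega_h\subset\Omega$; its nodes are $\mathcal N_h=\mathcal N_h^I\cup\mathcal N_h^B$, where the boundary nodes $\mathcal N_h^B$ (nodes on $\partial\Omega_h$) lie on $\partial\Omega$ and $\mathcal N_h^I$ are the interior nodes. The mesh function $h$ is the upper semicontinuous function with $h(x)=\operatorname{diam}T$ for $x$ in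 the interior of $T\in\mathcal T_h$ (on element boundaries, the largest diameter of the adjacent elements), and $\mathbb h=\|h\|_{L^\infty}$ is the maximal element diameter. Functions on $\Omega_h$ are extended to $\overline\Omega$ by being constant along the outer normal directions of $\partial\Omega_h$. $B(\overline\Omega)$ denotes the bounded real functions on $\overline\Omega$. Controls: $\mathbf F\subset\mathbb R^{d\times d}\times\{\text{diagonal }d\times d\text{ matrices}\}$ is compact, the map $(\sigma,\lambda)\mapsto\sigma\lambda\sigma^T$ is a bijection from $\mathbf F$ onto $\mathbb S_1$, and every $\lambda$ occurring in $\mathbf F$ has nonnegative diagonal entries and the same trace $C>0$. For $B\in\mathbb S_1$, $(\sigma(B),\lambda(B))$ denotes its preimage; $\sigma_j$ is the $j$th column of $\sigma$ and $\lambda_j$ the $j$th diagonal entry of $\lambda$. Stencil size: $k=k(h,x)>0$ is such that $x\pm k(h,x)\sigma_j\in\overline\Omega_h$ for every $x\in\Omega_h$ and every column $\sigma_j$ of every $\sigma$ with $(\sigma,\lambda)\in\mathbf F$. With $\Omega_i=\{x\in\Omega:\operatorname{dist}(x,\partial\Omega)>1/i\}$: (K1) for each $i\in\mathbb N$, $\sup_{x\in\Omega_i}h(x)/k(h,x)\to0$ as $\mathbb h\to0$; (K2) for each $i$ there is $h'>0$ such that $x\mapsto k(h,x)$ is constant on $\Omega_i$ whenever $\mathbb h<h'$; (K3) $\sup_{x\in\Omega}k(h,x)\to0$ as $\mathbb h\to0$. Discrete Hamiltonian: for $B\in\mathbb S_1$, $s\in\mathbb R$, $\phi\in B(\overline\Omega)$,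 with $(\sigma,\lambda)=(\sigma(B),\lambda(B))$ and $k=k(h,x_i)$, set $L_h^B(s,\phi)(x_i)=-\sum_{j=1}^d\lambda_j\frac{\phi(x_i-k\sigma_j)-2s+\phi(x_i+k\sigma_j)}{k^2}+f(x_i)\sqrt[d]{\det B}$ for $x_i\in\mathcal N_h^I$, and $L_h^B(s,\phi)(x_i)=s-g(x_i)$ for $x_i\in\mathcal N_h^B$. Set $H_h(s,\phi)(x_i)=\sup_{B\in\mathbb S_1}L_h^B(s,\phi)(x_i)$ at nodes; $H_h(s,\phi)$ is extended to $\Omega_h$ by piecewise linear interpolation of the nodal values and to $\overline\Omega$ by constant extension along outer normals of $\partial\Omega_h$. Finally $S(\mathbb h,x,s,\phi):=\mathbb h\,H_h(s,\phi)(x)$ for $x\in\overline\Omega$. *)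

From Stdlib Require Import Reals ClassicalEpsilon.
From mathcomp Require Import all_boot all_fingroup.

Set Implicit Arguments.
Unset Strict Implicit.

Open Scope R_scope.

Definition vec (d : nat) := 'I_d -> R.
Definition mat (d : nat) := 'I_d -> 'I_d -> R.

Definition sumR {d : nat} (F : 'I_d -> R) : R := \big[Rplus/0]_(i < d) F i.

Definition vadd {d} (x y : vec d) : vec d := fun i => x i + y i.
Definition vsub {d} (x y : vec d) : vec d := fun i => x i - y i.
Definition vscale {d} (a : R) (x : vec d) : vec d := fun i => a * x i.
Definition vnorm {d} (x : vec d) : R := sqrt (sumR (fun i => x i * x i)).
Definition vdist {d} (x y : vec d) : R := vnorm (vsub x y).
Definition basis {d} (j : 'I_d) : vec d := fun i => if i == j then 1 else 0.

Definition Rsup (P : R -> Prop) : R := epsilon (inhabits 0) (fun s => is_lub P s).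

Definition is_open {d} (U : vec d -> Prop) :=
  forall x, U x -> exists r, 0 < r /\ forall y, vdist y x < r -> U y.
Definition clos {d} (U : vec d -> Prop) (x : vec d) :=
  forall r, 0 < r -> exists y, U y /\ vdist y x < r.
Definition interior_v {d} (U : vec d -> Prop) (x : vec d) :=
  exists r, 0 < r /\ forall y, vdist y x < r -> U y.
(* boundary of an open set *)
Definition bdry {d} (U : vec d -> Prop) (x : vec d) := clos U x /\ ~ U x.
Definition bounded_set {d} (U : vec d -> Prop) := exists M, forall x, U x -> vnorm x <= M.
Definition strictly_convex {d} (U : vec d -> Prop) :=
  forall x y, clos U x -> clos U y -> x <> y -> forall t, 0 < t < 1 ->
    U (vadd (vscale (1 - t) x) (vscale t y)).
Definition bounded_on {d} (U : vec d -> Prop) (u : vec d -> R) :=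
  exists M, forall x, U x -> Rabs (u x) <= M.
Definition cont_on {d} (U : vec d -> Prop) (u : vec d -> R) :=
  forall y, U y -> forall eps, 0 < eps -> exists del, 0 < del /\
    forall z, U z -> vdist z y < del -> Rabs (u z - u y) < eps.

Definition Omega_i {d} (Om : vec d -> Prop) (i : nat) (x : vec d) :=
  Om x /\ exists r, / INR i < r /\ forall z, bdry Om z -> r <= vdist x z.

Definition has_partial {d} (u : vec d -> R) (y : vec d) (j : 'I_d) (l : R) :=
  derivable_pt_lim (fun t => u (vadd y (vscale t (basis j)))) 0 l.

Fixpoint Ck {d} (m : nat) (U : vec d -> Prop) (u : vec d -> R) : Prop :=
  cont_on U u /\
  match m with
  | O => True
  | S m' => exists Du : 'I_d -> vec d -> R,
      (forall j y, U y -> has_partial u y j (Du j y)) /\ forall j, Ck m' U (Du j)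
  end.

Definition is_second_partial {d} (u : vec d -> R) (x : vec d) (i j : 'I_d) (a : R) :=
  exists r, 0 < r /\ exists g : vec d -> R,
    (forall y, vdist y x < r -> has_partial u y j (g y)) /\ has_partial g x i a.

Definition hessian {d} (u : vec d -> R) (x : vec d) : mat d :=
  epsilon (inhabits (fun _ _ => 0))
    (fun A : mat d => forall i j, is_second_partial u x i j (A i j)).

Definition trace {d} (A : mat d) : R := sumR (fun i => A i i).
Definition frob {d} (A B : mat d) : R := sumR (fun i => sumR (fun j => A i j * B i j)).
Definition symmetric {d} (A : mat d) := forall i j, A i j = A j i.
Definition psd {d} (A : mat d) :=
  symmetric A /\ forall v : vec d, 0 <= sumR (fun i => sumR (fun j => v i * A i j * v j)).
Definition S1 {d} (B : mat d) := psd B /\ trace B = 1.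

Definition det {d} (A : mat d) : R :=
  \big[Rplus/0]_(s : 'S_d)
     ((if odd_perm s then -1 else 1) * \big[Rmult/1]_(i < d) A i (s i)).

Definition root_d (d : nat) (x : R) : R :=
  if Rlt_dec 0 x then Rpower x (/ INR d) else 0.

Definition Hcont {d} (A : mat d) (fv : R) : R :=
  Rsup (fun v => exists B : mat d, S1 B /\ v = - frob B A + fv * root_d d (det B)).

(* a control is (sigma, lambda); lambda is the diagonal of the diagonal matrix *)
Definition ctrl_prod {d} (sg : mat d) (lam : vec d) : mat d :=
  fun i j => sumR (fun l => sg i l * lam l * sg j l).
Definition col {d} (sg : mat d) (j : 'I_d) : vec d := fun i => sg i j.

Definition controls_ok {d} (F : mat d -> vec d -> Prop) (C : R) :=
  (* compact: bounded and (sequentially) closed in R^{dxd} x R^d *)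
  (exists K, forall sg lam, F sg lam -> (forall i j, Rabs (sg i j) <= K) /\ (forall i, Rabs (lam i) <= K)) /\
  (forall (sgn : nat -> mat d) (lamn : nat -> vec d) sg lam,
      (forall n, F (sgn n) (lamn n)) ->
      (forall i j, Un_cv (fun n => sgn n i j) (sg i j)) ->
      (forall i, Un_cv (fun n => lamn n i) (lam i)) -> F sg lam) /\
  (* (sigma,lambda) |-> sigma lambda sigma^T is a bijection F -> S_1 *)
  (forall sg lam, F sg lam -> S1 (ctrl_prod sg lam)) /\
  (forall B, S1 B -> exists sg lam, F sg lam /\ ctrl_prod sg lam = B) /\
  (forall sg lam sg' lam', F sg lam -> F sg' lam' ->
      ctrl_prod sg lam = ctrl_prod sg' lam' -> sg = sg' /\ lam = lam') /\
  (* nonnegative diagonal entries, common trace C > 0 *)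
  0 < C /\
  (forall sg lam, F sg lam -> (forall i, 0 <= lam i) /\ sumR lam = C).

Definition simplex (d : nat) := 'I_d.+1 -> vec d.
Definition mesh (d : nat) := list (simplex d).

Definition bary {d} (T : simplex d) (p : vec d) (mu : 'I_d.+1 -> R) :=
  (forall i, 0 <= mu i) /\ \big[Rplus/0]_(i < d.+1) mu i = 1 /\
  p = (fun c => \big[Rplus/0]_(i < d.+1) (mu i * T i c)).
Definition in_simplex {d} (T : simplex d) (p : vec d) := exists mu, bary T p mu.

Definition diam {d} (T : simplex d) : R :=
  Rsup (fun r => exists p q, in_simplex T p /\ in_simplex T q /\ r = vdist p q).

(* closed union of the elements = clos of Omega_h *)
Definition Om_bar_h {d} (M : mesh d) (p : vec d) := exists T, List.In T M /\ in_simplex T p.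
Definition Om_h {d} (M : mesh d) : vec d -> Prop := interior_v (Om_bar_h M).

Definition is_node {d} (M : mesh d) (p : vec d) := exists T i, List.In T M /\ T i = p.
Definition interior_node {d} (M : mesh d) p := is_node M p /\ Om_h M p.
Definition boundary_node {d} (M : mesh d) p := is_node M p /\ ~ Om_h M p.

(* conforming: two elements meet in the common face spanned by shared vertices *)
Definition conforming {d} (M : mesh d) :=
  forall T1 T2 p, List.In T1 M -> List.In T2 M -> in_simplex T1 p -> in_simplex T2 p ->
    exists mu, bary T1 p mu /\ forall i, mu i <> 0 -> exists j, T2 j = T1 i.

Definition admissible_mesh {d} (Om : vec d -> Prop) (M : mesh d) :=
  conforming M /\ (forall p, Om_h M p -> Om p) /\
  (forall p, boundary_node M p -> bdry Om p).

Definition shape_regular {d} (Ms : nat -> mesh d) :=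
  exists c, 0 < c /\ forall n T, List.In T (Ms n) ->
    0 < diam T /\ exists z, forall p, vdist p z <= c * diam T -> in_simplex T p.

(* mesh function h(x): largest diameter of elements containing x (0 off the mesh) *)
Definition meshfun {d} (M : mesh d) (x : vec d) : R :=
  Rsup (fun r => r = 0 \/ exists T, List.In T M /\ in_simplex T x /\ r = diam T).
Definition hmax {d} (M : mesh d) : R :=
  Rsup (fun r => r = 0 \/ exists T, List.In T M /\ r = diam T).

Definition Lint {d} (f : vec d -> R) (k : vec d -> R) (s : R) (phi : vec d -> R)
    (p : vec d) (B sg : mat d) (lam : vec d) : R :=
  - sumR (fun j => lam j *
       ((phi (vsub p (vscale (k p) (col sg j))) - 2 * s
         + phi (vadd p (vscale (k p) (col sg j)))) / (k p ^ 2)))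
  + f p * root_d d (det B).

Definition Hnode {d} (f g : vec d -> R) (F : mat d -> vec d -> Prop) (M : mesh d)
    (k : vec d -> R) (s : R) (phi : vec d -> R) (p : vec d) : R :=
  if excluded_middle_informative (Om_h M p) then
    Rsup (fun v => exists B sg lam, S1 B /\ F sg lam /\ ctrl_prod sg lam = B /\
                     v = Lint f k s phi p B sg lam)
  else s - g p.

(* piecewise linear interpolation of nodal values (only meaningful on Om_bar_h) *)
Definition interp {d} (M : mesh d) (u : vec d -> R) (y : vec d) : R :=
  epsilon (inhabits 0) (fun w => exists T mu, List.In T M /\ bary T y mu /\
      w = \big[Rplus/0]_(i < d.+1) (mu i * u (T i))).

Definition Hh {d} f g F (M : mesh d) k s phi : vec d -> R :=
  interp M (Hnode f g F M k s phi).

Definition Sscheme {d} f g F (M : mesh d) k (y : vec d) (s : R) (phi : vec d -> R) : R :=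
  hmax M * Hh f g F M k s phi y.

(* At an interior node z close to x, where the stencil size has a common value c by (K2), the
   discrete operator applied to the centre value phi(y) + xi and to phi + xi is, control by control,
   the centred second difference of phi plus the offset 2 C (phi(y) - phi(z)) / c^2, C being the
   common trace of the lambda's; the shift xi cancels.  Taylor's formula and the continuity of D^2 phi
   make each second difference close to sigma lambda sigma^T : D^2 phi(x), and the continuity of f
   controls the determinant term, so every nodal value equals H(D^2 phi(x), f(x)) plus that offset,
   up to a small error.  Interpolating at y with barycentric weights kills the linear part of
   phi(y) - phi(z), which leaves a Taylor remainder of order h^2 / c^2; it vanishes by (K1), while
   (K3) keeps all stencils inside the neighbourhood of x where these estimates hold. *)

From HB Require Import structures.
From mathcomp Require Import all_boot all_fingroup.
From Stdlib Require Import Reals ClassicalEpsilon Lra Lia FunctionalExtensionality.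

Set Implicit Arguments.
Unset Strict Implicit.

Open Scope R_scope.

HB.instance Definition _ := Monoid.isComLaw.Build R 0 Rplus
  (fun a b c => esym (Rplus_assoc a b c)) Rplus_comm Rplus_0_l.
HB.instance Definition _ := Monoid.isMulLaw.Build R 0 Rmult Rmult_0_l Rmult_0_r.
HB.instance Definition _ := Monoid.isAddLaw.Build R Rmult Rplus
  Rmult_plus_distr_r Rmult_plus_distr_l.

(** * Finite sums and vectors *)

Section Sums.
Variable d : nat.
Implicit Types F G : 'I_d -> R.

Lemma sumR_ext F G : (forall i, F i = G i) -> sumR F = sumR G.
Proof. by move=> H; apply: eq_bigr => i _. Qed.

Lemma sumR_le F G : (forall i, F i <= G i) -> sumR F <= sumR G.
Proof.
move=> H; apply: (big_ind2 (fun a b => a <= b)) => [|a b a' b'|i _]; try lra.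
exact: H.
Qed.

Lemma sumR_ge0 F : (forall i, 0 <= F i) -> 0 <= sumR F.
Proof.
move=> H; apply: (big_ind (fun a => 0 <= a)) => [|a b|i _]; try lra.
exact: H.
Qed.

Lemma Rabs_sumR_le F : Rabs (sumR F) <= sumR (fun i => Rabs (F i)).
Proof.
apply: (big_ind2 (fun a b => Rabs a <= b)) => [|a b a' b' Ha Hb|i _].
- rewrite Rabs_R0; lra.
- apply: Rle_trans (Rabs_triang _ _) _; lra.
- lra.
Qed.

Lemma sumR_add F G : sumR (fun i => F i + G i) = sumR F + sumR G.
Proof. exact: big_split. Qed.

Lemma sumR_mull F c : sumR (fun i => c * F i) = c * sumR F.
Proof. by rewrite /sumR big_distrr. Qed.

Lemma sumR_mulr F c : sumR (fun i => F i * c) = sumR F * c.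
Proof. by rewrite /sumR big_distrl. Qed.

Lemma sumR_opp F : sumR (fun i => - F i) = - sumR F.
Proof.
have -> : - sumR F = (-1) * sumR F by ring.
by rewrite -sumR_mull; apply: sumR_ext => i; ring.
Qed.

Lemma sumR_sub F G : sumR (fun i => F i - G i) = sumR F - sumR G.
Proof. by rewrite /Rminus -sumR_opp -sumR_add. Qed.

Lemma sumR_ge_term F i0 : (forall i, 0 <= F i) -> F i0 <= sumR F.
Proof.
move=> H; rewrite /sumR (bigD1 i0) //=.
match goal with |- _ <= _ + ?rest => have : 0 <= rest end.
  by apply: (big_ind (fun a => 0 <= a)) => [|a b|i _]; [lra | lra | exact: H].
lra.
Qed.

Lemma sumR_const c : sumR (fun _ : 'I_d => c) = INR d * c.
Proof.
rewrite /sumR big_const_ord.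
by elim: d => [|n IH]; rewrite ?iterS ?IH ?S_INR /=; ring.
Qed.

Lemma sumR_delta (j : 'I_d) (a : 'I_d -> R) :
  sumR (fun i => if i == j then a i else 0) = a j.
Proof. by rewrite /sumR -big_mkcond big_pred1_eq. Qed.

Lemma Rabs_sumR_mul_le (a b : 'I_d -> R) B : (forall j, Rabs (b j) <= B) ->
  Rabs (sumR (fun j => a j * b j)) <= sumR (fun j => Rabs (a j)) * B.
Proof.
move=> H; apply: Rle_trans (Rabs_sumR_le _) _; rewrite -sumR_mulr.
apply: sumR_le => j; rewrite Rabs_mult.
apply: Rmult_le_compat_l; [exact: Rabs_pos | exact: H].
Qed.

End Sums.

Lemma matrix_abs_bounded n (A : 'I_n -> 'I_n -> R) :
  exists M, 0 <= M /\ forall j i, Rabs (A j i) + 1 <= M.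
Proof.
have Hrow j : 0 <= sumR (fun i => Rabs (A j i)) by apply: sumR_ge0 => i; apply: Rabs_pos.
exists (sumR (fun j => sumR (fun i => Rabs (A j i))) + 1); split.
  by have := sumR_ge0 Hrow; lra.
move=> j i; apply: Rplus_le_compat_r; apply: Rle_trans _ (sumR_ge_term j Hrow).
by apply: (sumR_ge_term (F := fun i => Rabs (A j i))) => i'; apply: Rabs_pos.
Qed.

Lemma sumR_swap n m (A : 'I_n -> 'I_m -> R) :
  sumR (fun i => sumR (fun j => A i j)) = sumR (fun j => sumR (fun i => A i j)).
Proof. exact: exchange_big. Qed.

Lemma sqr_le_of_Rabs_le x y : Rabs x <= y -> x * x <= y * y.
Proof.
move=> H; have := Rsqr_abs x; rewrite /Rsqr => ->; have := Rabs_pos x; nra.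
Qed.

Section Vectors.
Variable d : nat.
Implicit Types v w x y z : vec d.

Lemma vnorm_ge0 v : 0 <= vnorm v.
Proof. exact: sqrt_pos. Qed.

Lemma Rabs_coord_le_vnorm v i : Rabs (v i) <= vnorm v.
Proof.
rewrite /vnorm -(sqrt_Rsqr_abs (v i)); apply: sqrt_le_1_alt.
by rewrite /Rsqr; apply: sumR_ge_term => j; apply: Rle_0_sqr.
Qed.

Lemma vnorm_le v w : (forall i, Rabs (v i) <= Rabs (w i)) -> vnorm v <= vnorm w.
Proof.
move=> H; apply: sqrt_le_1_alt; apply: sumR_le => i.
have := Rsqr_abs (w i); rewrite /Rsqr => ->; exact: sqr_le_of_Rabs_le.
Qed.

(* The crude constant d (instead of sqrt d) keeps the arithmetic free of roots. *)
Lemma vnorm_le_box v a : 0 <= a -> (forall i, Rabs (v i) <= a) -> vnorm v <= INR d * a.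
Proof.
move=> Ha H; have Hd := pos_INR d.
apply: Rle_trans (_ : sqrt (INR d * (a * a)) <= _).
  apply: sqrt_le_1_alt; rewrite -sumR_const; apply: sumR_le => i.
  exact: sqr_le_of_Rabs_le.
rewrite -(sqrt_square (INR d * a)); last exact: Rmult_le_pos.
apply: sqrt_le_1_alt.
have : INR d <= INR d * INR d.
  case: d => [|n]; first by rewrite /=; lra.
  by rewrite S_INR; have := pos_INR n; nra.
have := Rle_0_sqr a; rewrite /Rsqr; nra.
Qed.

Lemma vnorm_scale a v : vnorm (vscale a v) = Rabs a * vnorm v.
Proof.
rewrite /vnorm /vscale (sumR_ext (G := fun i => (a * a) * (v i * v i))); last by move=> i; ring.
rewrite sumR_mull sqrt_mult ?sqrt_Rsqr_abs //; first exact: Rle_0_sqr.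
by apply: sumR_ge0 => i; apply: Rle_0_sqr.
Qed.

Lemma vdist_refl v : vdist v v = 0.
Proof.
rewrite /vdist /vnorm (sumR_ext (G := fun _ => 0)); last by move=> i; rewrite /vsub; ring.
by rewrite sumR_const Rmult_0_r sqrt_0.
Qed.

Lemma vdist_sym v w : vdist v w = vdist w v.
Proof. by rewrite /vdist /vnorm; f_equal; apply: sumR_ext => i; rewrite /vsub; ring. Qed.

Lemma sumR_abs_le_vnorm v : sumR (fun i => Rabs (v i)) <= INR d * vnorm v.
Proof. rewrite -sumR_const; apply: sumR_le => i; exact: Rabs_coord_le_vnorm. Qed.

Lemma vdist_axis x i t : vdist (vadd x (vscale t (basis i))) x = Rabs t.
Proof.
rewrite /vdist; have -> : vsub (vadd x (vscale t (basis i))) x = vscale t (basis i).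
  by apply: functional_extensionality => c; rewrite /vsub /vadd /vscale; ring.
rewrite vnorm_scale /vnorm (sumR_ext (G := fun j => if j == i then 1 else 0)).
  by rewrite sumR_delta sqrt_1 Rmult_1_r.
by move=> j; rewrite /basis; case: (j == i); ring.
Qed.

Definition in_box x r z := forall c, Rabs (z c - x c) <= r.

Lemma in_box_vdist x r z : 0 <= r -> in_box x r z -> vdist z x <= INR d * r.
Proof. exact: vnorm_le_box. Qed.

Lemma vdist_in_box x r z : vdist z x <= r -> in_box x r z.
Proof. by move=> H c; apply: Rle_trans H; apply: (Rabs_coord_le_vnorm (vsub z x)). Qed.

Lemma in_box_le x r s z : r <= s -> in_box x r z -> in_box x s z.
Proof. by move=> Hrs Hz c; apply: Rle_trans (Hz c) Hrs. Qed.

Lemma in_box_trans x z w r s : in_box x r z -> in_box z s w -> in_box x (r + s) w.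
Proof.
move=> Hz Hw c; have := Rabs_triang (z c - x c) (w c - z c).
have := Hz c; have := Hw c; have -> : z c - x c + (w c - z c) = w c - x c by ring.
lra.
Qed.

Lemma in_box_segment x r a b t : 0 <= t <= 1 -> in_box x r a -> in_box x r b ->
  in_box x r (vadd a (vscale t (vsub b a))).
Proof.
move=> Ht Ha Hb c; rewrite /vadd /vscale /vsub.
have -> : a c + t * (b c - a c) - x c = (1 - t) * (a c - x c) + t * (b c - x c) by ring.
apply: Rle_trans (Rabs_triang _ _) _.
rewrite !Rabs_mult (Rabs_pos_eq (1 - t)) ?(Rabs_pos_eq t); try lra.
have := Ha c; have := Hb c; nra.
Qed.

End Vectors.

(** * Calculus *)

Lemma MVT_abs_le f f' a b M :
  (forall c, Rmin a b <= c <= Rmax a b -> derivable_pt_lim f c (f' c)) ->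
  (forall c, Rmin a b <= c <= Rmax a b -> Rabs (f' c) <= M) ->
  Rabs (f b - f a) <= M * Rabs (b - a).
Proof.
move=> Hd HM; case: (MVT_abs f f' a b Hd) => c [-> Hc].
apply: Rmult_le_compat_r; [exact: Rabs_pos | exact: HM].
Qed.

Lemma MVT_le f f' a b M : a <= b ->
  (forall c, a <= c <= b -> derivable_pt_lim f c (f' c)) ->
  (forall c, a <= c <= b -> Rabs (f' c) <= M) ->
  Rabs (f b - f a) <= M * (b - a).
Proof.
move=> Hab Hd HM; rewrite -(Rabs_pos_eq (b - a)); last lra.
have Emin : Rmin a b = a by apply: Rmin_left.
have Emax : Rmax a b = b by apply: Rmax_right.
by apply: (MVT_abs_le (f' := f')); rewrite Emin Emax.
Qed.

Lemma derivable_pt_lim_linear c t : derivable_pt_lim (fun s => c * s) t c.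
Proof.
have := derivable_pt_lim_scal id c t 1 (derivable_pt_lim_id t).
by rewrite Rmult_1_r.
Qed.

Lemma derivable_pt_lim_sqr_mul c t : derivable_pt_lim (fun s => s * s * c) t (2 * t * c).
Proof.
have := derivable_pt_lim_scal _ c t _
  (derivable_pt_lim_mult id id t 1 1 (derivable_pt_lim_id t) (derivable_pt_lim_id t)).
have -> : c * (1 * id t + id t * 1) = 2 * t * c by rewrite /id; ring.
have -> : mult_real_fct c (id * id)%F = (fun s => s * s * c).
  by apply: functional_extensionality => s; rewrite /mult_real_fct /mult_fct /id; ring.
done.
Qed.

Lemma derivable_pt_lim_shift f t0 l :
  derivable_pt_lim (fun s => f (t0 + s)) 0 l -> derivable_pt_lim f t0 l.
Proof.
move=> H eps Heps; case: (H eps Heps) => del Hd; exists del => h h0 hd.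
by have := Hd h h0 hd; rewrite Rplus_0_l Rplus_0_r.
Qed.

Lemma derivable_pt_lim_local_unique f g l l' r : 0 < r ->
  (forall t, Rabs t < r -> f t = g t) ->
  derivable_pt_lim f 0 l -> derivable_pt_lim g 0 l' -> l = l'.
Proof.
move=> Hr E Hf Hg; apply: (uniqueness_limite g 0) => // eps Heps.
case: (Hf eps Heps) => del Hd.
have Hm : 0 < Rmin del r by apply: Rmin_pos => //; apply: cond_pos.
exists (mkposreal _ Hm) => h h0 /= hd.
have Hh : Rabs h < r := Rlt_le_trans _ _ _ hd (Rmin_r _ _).
rewrite -E; last by rewrite Rplus_0_l.
rewrite -E; last by rewrite Rabs_R0.
exact: Hd h h0 (Rlt_le_trans _ _ _ hd (Rmin_l _ _)).
Qed.

Lemma ex_pos_uniform (I : finType) (P : I -> R -> Prop) :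
  (forall j a b, 0 < a <= b -> P j b -> P j a) ->
  (forall j, exists del, 0 < del /\ P j del) ->
  exists del, 0 < del /\ forall j, P j del.
Proof.
move=> Hmono H.
suff [del [Hdel Hl]] : exists del, 0 < del /\ forall j, j \in enum I -> P j del.
  by exists del; split => // j; apply: Hl; rewrite mem_enum.
elim: (enum I) => [|a l [del [Hdel IH]]]; first by exists 1; split; [lra | move=> j].
case: (H a) => da [Hda Pa]; have Hm := Rmin_pos _ _ Hda Hdel.
exists (Rmin da del); split => // j; rewrite in_cons => /orP [/eqP -> | Hj].
  by apply: (Hmono _ _ da) => //; split => //; apply: Rmin_l.
by apply: (Hmono _ _ del); [split => //; apply: Rmin_r | exact: IH].
Qed.

Section Differentiability.
Variable d : nat.
Implicit Types (u : vec d -> R) (p q y z : vec d).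

Lemma vadd_scale0 z (v : vec d) : vadd z (vscale 0 v) = z.
Proof. by apply: functional_extensionality => i; rewrite /vadd /vscale; ring. Qed.

Lemma vadd_scale_shift z (v : vec d) t s :
  vadd (vadd z (vscale t v)) (vscale s v) = vadd z (vscale (t + s) v).
Proof. by apply: functional_extensionality => i; rewrite /vadd /vscale; ring. Qed.

Lemma partial_increment (U : vec d -> Prop) u (Du : vec d -> R) i p q s e :
  (forall y, U y -> has_partial u y i (Du y)) ->
  (forall t, Rmin 0 s <= t <= Rmax 0 s -> U (vadd q (vscale t (basis i))) /\
     Rabs (Du (vadd q (vscale t (basis i))) - Du p) <= e) ->
  Rabs (u (vadd q (vscale s (basis i))) - u q - s * Du p) <= e * Rabs s.
Proof.
move=> Hpar Hseg.
pose g t := u (vadd q (vscale t (basis i))) - Du p * t.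
have -> : u (vadd q (vscale s (basis i))) - u q - s * Du p = g s - g 0.
  by rewrite /g vadd_scale0; ring.
rewrite -[X in _ <= _ * Rabs X]Rminus_0_r.
apply: (MVT_abs_le (f' := fun t => Du (vadd q (vscale t (basis i))) - Du p)) => t Ht;
  case: (Hseg t Ht) => HU He //.
apply: derivable_pt_lim_minus; last exact: derivable_pt_lim_linear.
apply: derivable_pt_lim_shift.
by rewrite (_ : (fun s => _) = fun s => u (vadd (vadd q (vscale t (basis i))) (vscale s (basis i))));
  [exact: Hpar | apply: functional_extensionality => s'; rewrite vadd_scale_shift].
Qed.

Lemma cont_on_near (I : finType) (U : vec d -> Prop) (Du : I -> vec d -> R) p :
  is_open U -> U p -> (forall j, cont_on U (Du j)) ->
  forall e, 0 < e -> exists del, 0 < del /\ forall z, vdist z p < del ->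
    U z /\ forall j, Rabs (Du j z - Du j p) <= e.
Proof.
move=> HU Hp Hc e He; case: (HU p Hp) => r [Hr Hball].
have [del [Hdel Hj]] : exists del, 0 < del /\ forall j z, vdist z p < del ->
    Rabs (Du j z - Du j p) <= e.
  apply: ex_pos_uniform => [j a b Hab H z Hz | j]; first by apply: H; lra.
  case: (Hc j p Hp e He) => del [Hdel Hz].
  exists (Rmin del r); split => [|z Hzp]; first exact: Rmin_pos.
  have Hzr := Rlt_le_trans _ _ _ Hzp (Rmin_r _ _).
  by apply: Rlt_le; apply: Hz; [exact: Hball | apply: Rlt_le_trans Hzp (Rmin_l _ _)].
exists (Rmin del r); split => [|z Hz]; first exact: Rmin_pos.
split; first by apply: Hball; apply: Rlt_le_trans Hz (Rmin_r _ _).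
by move=> j; apply: Hj; apply: Rlt_le_trans Hz (Rmin_l _ _).
Qed.

Lemma ltn_ord_succ (i : 'I_d) (m : nat) (Hm : (m < d)%nat) :
  (i < m.+1)%nat = (i < m)%nat || (i == Ordinal Hm).
Proof. by rewrite ltnS leq_eqVlt orbC. Qed.

Lemma frechet_of_cont_partials (U : vec d -> Prop) u (Du : 'I_d -> vec d -> R) p :
  (forall j y, U y -> has_partial u y j (Du j y)) ->
  (forall e, 0 < e -> exists del, 0 < del /\ forall z, vdist z p < del ->
     U z /\ forall j, Rabs (Du j z - Du j p) <= e) ->
  forall eps, 0 < eps -> exists del, 0 < del /\ forall h, vnorm h < del ->
    Rabs (u (vadd p h) - u p - sumR (fun j => h j * Du j p)) <= eps * vnorm h.
Proof.
move=> Hpar Hnear eps Heps; have Hd := pos_INR d.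
set e := eps / (INR d + 1).
have He : 0 < e by apply: Rdiv_lt_0_compat; lra.
case: (Hnear e He) => del [Hdel Hz].
exists del; split => // h Hh.
(* Telescope over the coordinates: [q m] moves the first [m] coordinates of [p] by [h]. *)
pose q m := fun i : 'I_d => p i + (if (i < m)%nat then h i else 0).
pose L m := sumR (fun j : 'I_d => if (j < m)%nat then h j * Du j p else 0).
suff key : forall m, (m <= d)%nat -> Rabs (u (q m) - u p - L m) <= INR m * e * vnorm h.
  have := key d (leqnn d).
  have -> : q d = vadd p h by apply: functional_extensionality => i; rewrite /q ltn_ord.
  rewrite /L (sumR_ext (G := fun j => h j * Du j p)) => [H|i]; last by rewrite ltn_ord.
  apply: Rle_trans H _; apply: Rmult_le_compat_r; first exact: vnorm_ge0.
  have -> : eps = e * (INR d + 1) by rewrite /e; field; lra.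
  nra.
elim=> [|m IH] Hm.
  have -> : q 0%nat = p by apply: functional_extensionality => i; rewrite /q ltn0 Rplus_0_r.
  rewrite /L (sumR_ext (G := fun _ => 0)) => [|i]; last by rewrite ltn0.
  by rewrite sumR_const /= Rmult_0_r !Rminus_diag Rabs_R0 !Rmult_0_l; lra.
set i0 := Ordinal Hm.
have Eq : q m.+1 = vadd (q m) (vscale (h i0) (basis i0)).
  apply: functional_extensionality => i; rewrite /q /vadd /vscale /basis ltn_ord_succ.
  by case: (i =P i0) => [->|_]; rewrite ?ltnn ?orbF ?orbT /=; ring.
have EL : L m.+1 = L m + h i0 * Du i0 p.
  rewrite /L -(sumR_delta i0 (fun j => h j * Du j p)) -sumR_add; apply: sumR_ext => i.
  by rewrite ltn_ord_succ; case: (i =P i0) => [->|_]; rewrite ?ltnn ?orbF ?orbT /=; ring.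
have Hinc : Rabs (u (q m.+1) - u (q m) - h i0 * Du i0 p) <= e * Rabs (h i0).
  rewrite Eq; apply: (partial_increment (U := U)) => [j y|t Ht]; first exact: Hpar.
  have Hdist : vdist (vadd (q m) (vscale t (basis i0))) p <= vnorm h.
    apply: vnorm_le => i; rewrite /vsub /vadd /vscale /q /basis.
    case: (i =P i0) => [->|_]; first by rewrite ltnn; move: Ht; unfold Rmin, Rmax;
      case: Rle_dec => _ Ht; split_Rabs; lra.
    case: (i < m)%nat; first by right; f_equal; ring.
    by rewrite (_ : _ - p i = 0) ?Rabs_R0; [apply: Rabs_pos | ring].
  by case: (Hz _ (Rle_lt_trans _ _ _ Hdist Hh)) => HU Hclose; split => //; apply: Hclose.
have := IH (ltnW Hm); have := Rabs_coord_le_vnorm h i0; have := Rabs_triang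
  (u (q m) - u p - L m) (u (q m.+1) - u (q m) - h i0 * Du i0 p).
have -> : u (q m) - u p - L m + (u (q m.+1) - u (q m) - h i0 * Du i0 p) =
          u (q m.+1) - u p - L m.+1 by rewrite EL; ring.
rewrite S_INR; nra.
Qed.

Lemma derivable_pt_lim_line (U : vec d -> Prop) u (Du : 'I_d -> vec d -> R) :
  is_open U -> (forall j y, U y -> has_partial u y j (Du j y)) ->
  (forall j, cont_on U (Du j)) ->
  forall y v t0, U (vadd y (vscale t0 v)) ->
  derivable_pt_lim (fun t => u (vadd y (vscale t v))) t0
     (sumR (fun j => v j * Du j (vadd y (vscale t0 v)))).
Proof.
move=> HU Hpar Hcont y v t0 Hp; set p := vadd y (vscale t0 v).
have Hv := vnorm_ge0 v.
move=> eps Heps; set e := eps / 2 / (vnorm v + 1).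
have He : 0 < e by apply: Rdiv_lt_0_compat; lra.
case: (frechet_of_cont_partials Hpar (cont_on_near HU Hp Hcont) He) => del [Hdel Hf].
have Hdv : 0 < del / (vnorm v + 1) by apply: Rdiv_lt_0_compat; lra.
exists (mkposreal _ Hdv) => h h0 /= hd.
have Hh0 : 0 < Rabs h by apply: Rabs_pos_lt.
have Hh : Rabs h * (vnorm v + 1) < del.
  have := Rmult_lt_compat_r (vnorm v + 1) _ _ (ltac:(lra)) hd.
  by rewrite /Rdiv Rmult_assoc Rinv_l ?Rmult_1_r; lra.
have := Hf (vscale h v); rewrite vnorm_scale => Hb.
have {Hb} Hb := Hb (ltac:(nra)).
have Es : sumR (fun j => vscale h v j * Du j p) = h * sumR (fun j => v j * Du j p).
  by rewrite -sumR_mull; apply: sumR_ext => j; rewrite /vscale; ring.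
rewrite Es in Hb.
have -> : vadd y (vscale (t0 + h) v) = vadd p (vscale h v).
  by apply: functional_extensionality => i; rewrite /p /vadd /vscale; ring.
have -> : (u (vadd p (vscale h v)) - u p) / h - sumR (fun j => v j * Du j p) =
          (u (vadd p (vscale h v)) - u p - h * sumR (fun j => v j * Du j p)) / h by field.
rewrite /Rdiv Rabs_mult Rabs_inv; apply: (Rmult_lt_reg_r (Rabs h)) => //.
rewrite Rmult_assoc Rinv_l ?Rmult_1_r; last lra.
apply: Rle_lt_trans Hb _.
have -> : e * (Rabs h * vnorm v) = eps / 2 * (vnorm v / (vnorm v + 1)) * Rabs h.
  by rewrite /e; field; lra.
have : vnorm v / (vnorm v + 1) < 1.
  by apply: (Rmult_lt_reg_r (vnorm v + 1)); [lra | rewrite /Rdiv Rmult_assoc Rinv_l; lra].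
have : 0 <= vnorm v / (vnorm v + 1).
  by apply: Rmult_le_pos => //; apply: Rlt_le; apply: Rinv_0_lt_compat; lra.
have := Rmult_lt_0_compat _ _ Heps Hh0.
nra.
Qed.

End Differentiability.

Section Taylor.
Variable d : nat.
Variable Om : vec d -> Prop.
Variables (phi : vec d -> R) (Dphi : 'I_d -> vec d -> R) (D2 : 'I_d -> 'I_d -> vec d -> R).
Hypothesis Om_open : is_open Om.
Hypothesis phi_partial : forall j y, Om y -> has_partial phi y j (Dphi j y).
Hypothesis Dphi_cont : forall j, cont_on Om (Dphi j).
Hypothesis Dphi_partial : forall j i y, Om y -> has_partial (Dphi j) y i (D2 j i y).
Hypothesis D2_cont : forall j i, cont_on Om (D2 j i).

Lemma vadd_scale_opp z (v : vec d) t :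
  vadd z (vscale t (vscale (-1) v)) = vadd z (vscale (- t) v).
Proof. by apply: functional_extensionality => i; rewrite /vadd /vscale; ring. Qed.

Lemma gradient_symmetric_difference z (v : vec d) c eta (P : 'I_d -> R) :
  (forall t, -c <= t <= c -> Om (vadd z (vscale t v))) ->
  (forall j t, -c <= t <= c ->
     Rabs (sumR (fun i => v i * D2 j i (vadd z (vscale t v))) - P j) <= eta) ->
  forall t, 0 <= t <= c -> forall j,
  Rabs (Dphi j (vadd z (vscale t v)) - Dphi j (vadd z (vscale (- t) v)) - 2 * t * P j)
    <= eta * (2 * t).
Proof.
move=> HOm Heta t Ht j.
pose g s := Dphi j (vadd z (vscale s v)) - P j * s.
have -> : Dphi j (vadd z (vscale t v)) - Dphi j (vadd z (vscale (- t) v)) - 2 * t * P j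
          = g t - g (- t) by rewrite /g; ring.
rewrite (_ : 2 * t = t - - t); last ring.
apply: (MVT_le (f' := fun s => sumR (fun i => v i * D2 j i (vadd z (vscale s v))) - P j));
  [lra | move=> s Hs | move=> s Hs; apply: Heta; lra].
apply: derivable_pt_lim_minus; last exact: derivable_pt_lim_linear.
by apply: (derivable_pt_lim_line Om_open (Dphi_partial j) (D2_cont j)); apply: HOm; lra.
Qed.

Lemma second_difference_estimate z (v : vec d) c eta (P : 'I_d -> R) :
  0 < c -> 0 <= eta -> (forall t, -c <= t <= c -> Om (vadd z (vscale t v))) ->
  (forall j t, -c <= t <= c ->
     Rabs (sumR (fun i => v i * D2 j i (vadd z (vscale t v))) - P j) <= eta) ->
  Rabs (phi (vadd z (vscale c v)) + phi (vadd z (vscale (- c) v)) - 2 * phi z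
        - c * c * sumR (fun j => v j * P j))
   <= 2 * sumR (fun j => Rabs (v j)) * eta * (c * c).
Proof.
move=> Hc Heta HOm HD2; set q := sumR (fun j => v j * P j).
set S := sumR (fun j => Rabs (v j)).
have HS : 0 <= S by apply: sumR_ge0 => j; apply: Rabs_pos.
have Hgrad := gradient_symmetric_difference HOm HD2.
pose E t := phi (vadd z (vscale t v)) + phi (vadd z (vscale t (vscale (-1) v))) - 2 * phi z - t * t * q.
have -> : phi (vadd z (vscale c v)) + phi (vadd z (vscale (- c) v)) - 2 * phi z - c * c * q
          = E c - E 0 by rewrite /E !vadd_scale0 vadd_scale_opp; ring.
rewrite (_ : 2 * S * eta * (c * c) = 2 * S * eta * c * (c - 0)); last ring.
apply: (MVT_le (f' := fun t => sumR (fun j =>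
    v j * (Dphi j (vadd z (vscale t v)) - Dphi j (vadd z (vscale (- t) v)) - 2 * t * P j))));
  [lra | move=> t Ht | move=> t Ht].
- have -> : sumR (fun j => v j * (Dphi j (vadd z (vscale t v))
      - Dphi j (vadd z (vscale (- t) v)) - 2 * t * P j)) =
    sumR (fun j => v j * Dphi j (vadd z (vscale t v)))
    + sumR (fun j => vscale (-1) v j * Dphi j (vadd z (vscale t (vscale (-1) v)))) - 0
    - 2 * t * q.
    rewrite /q Rminus_0_r -sumR_add -sumR_mull -sumR_sub; apply: sumR_ext => j.
    by rewrite vadd_scale_opp /vscale; ring.
  apply: derivable_pt_lim_minus; last exact: derivable_pt_lim_sqr_mul.
  apply: derivable_pt_lim_minus; last exact: derivable_pt_lim_const.
  apply: derivable_pt_lim_plus;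
    apply: (derivable_pt_lim_line Om_open phi_partial Dphi_cont); rewrite ?vadd_scale_opp;
    apply: HOm; lra.
- apply: Rle_trans (Rabs_sumR_mul_le _ (fun j => Hgrad t Ht j)) _.
  rewrite -/S; have : eta * (2 * t) <= eta * (2 * c) by apply: Rmult_le_compat_l; lra.
  nra.
Qed.

Lemma taylor1_estimate y (w : vec d) M : 0 <= M ->
  (forall t, 0 <= t <= 1 -> Om (vadd y (vscale t w))) ->
  (forall j i t, 0 <= t <= 1 -> Rabs (D2 j i (vadd y (vscale t w))) <= M) ->
  Rabs (phi (vadd y w) - phi y - sumR (fun j => w j * Dphi j y))
   <= M * (sumR (fun i => Rabs (w i)) * sumR (fun i => Rabs (w i))).
Proof.
move=> HM0 HOm HM; set S := sumR (fun i => Rabs (w i)).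
have HS : 0 <= S by apply: sumR_ge0 => j; apply: Rabs_pos.
have Hgrad : forall t, 0 <= t <= 1 -> forall j,
    Rabs (Dphi j (vadd y (vscale t w)) - Dphi j y) <= S * M * t.
  move=> t Ht j; rewrite -{2}(vadd_scale0 y w) -{2}(Rminus_0_r t).
  apply: (MVT_le (f := fun s => Dphi j (vadd y (vscale s w)))
                 (f' := fun s => sumR (fun i => w i * D2 j i (vadd y (vscale s w)))));
    [lra | move=> s Hs | move=> s Hs].
    by apply: (derivable_pt_lim_line Om_open (Dphi_partial j) (D2_cont j)); apply: HOm; lra.
  by apply: Rabs_sumR_mul_le => i; apply: HM; lra.
set c0 := sumR (fun j => w j * Dphi j y).
pose E t := phi (vadd y (vscale t w)) - c0 * t.
have -> : phi (vadd y w) - phi y - c0 = E 1 - E 0.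
  rewrite /E vadd_scale0.
  have -> : vscale 1 w = w by apply: functional_extensionality => i; rewrite /vscale Rmult_1_l.
  ring.
rewrite (_ : M * (S * S) = S * (S * M * 1) * (1 - 0)); last ring.
apply: (MVT_le (f' := fun t => sumR (fun j => w j * (Dphi j (vadd y (vscale t w)) - Dphi j y))));
  [lra | move=> t Ht | move=> t Ht].
  rewrite (_ : sumR _ = sumR (fun j => w j * Dphi j (vadd y (vscale t w))) - c0);
    last by rewrite /c0 -sumR_sub; apply: sumR_ext => j; ring.
  apply: derivable_pt_lim_minus; last exact: derivable_pt_lim_linear.
  by apply: (derivable_pt_lim_line Om_open phi_partial Dphi_cont); apply: HOm; lra.
apply: Rabs_sumR_mul_le => j; apply: Rle_trans (Hgrad t Ht j) _.
have := Rmult_le_pos _ _ HS HM0; nra.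
Qed.


Lemma stencil_consistency x z c eta K (sg : mat d) (lam : vec d) C :
  0 < c -> 0 <= eta -> 0 <= K -> (forall i l, Rabs (sg i l) <= K) ->
  (forall l, 0 <= lam l) -> sumR lam = C ->
  (forall l t, -c <= t <= c -> Om (vadd z (vscale t (col sg l))) /\
     forall j i, Rabs (D2 j i (vadd z (vscale t (col sg l))) - D2 j i x) <= eta) ->
  Rabs (- sumR (fun l => lam l * ((phi (vadd z (vscale c (col sg l)))
                                   + phi (vadd z (vscale (- c) (col sg l))) - 2 * phi z) / (c * c)))
        + sumR (fun l => lam l * sumR (fun j => sg j l * sumR (fun i => sg i l * D2 j i x))))
  <= C * (2 * (INR d * K) * ((INR d * K) * eta)).
Proof.
move=> Hc Heta HK Hsg Hlam HC Hpts.
set E := 2 * (INR d * K) * ((INR d * K) * eta).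
have HdK : 0 <= INR d * K by apply: Rmult_le_pos => //; apply: pos_INR.
have HS l : sumR (fun i => Rabs (col sg l i)) <= INR d * K.
  by rewrite -sumR_const; apply: sumR_le => i; apply: Hsg.
have Hcc : 0 < c * c by nra.
have Hl l : Rabs (sumR (fun j => sg j l * sumR (fun i => sg i l * D2 j i x))
   - (phi (vadd z (vscale c (col sg l))) + phi (vadd z (vscale (- c) (col sg l))) - 2 * phi z)
     / (c * c)) <= E.
  have Hrow j t : -c <= t <= c -> Rabs (sumR (fun i => col sg l i *
      D2 j i (vadd z (vscale t (col sg l)))) - sumR (fun i => sg i l * D2 j i x)) <= INR d * K * eta.
    move=> Ht; rewrite -sumR_sub.
    rewrite (sumR_ext (G := fun i => col sg l i * (D2 j i (vadd z (vscale t (col sg l)))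
                                                  - D2 j i x))); last by move=> i; rewrite /col; ring.
    apply: Rle_trans (Rabs_sumR_mul_le _ (fun i => (proj2 (Hpts l t Ht)) j i)) _.
    by apply: Rmult_le_compat_r => //; apply: HS.
  have := second_difference_estimate Hc (Rmult_le_pos _ _ HdK Heta)
    (fun t Ht => proj1 (Hpts l t Ht)) Hrow.
  rewrite /col => H.
  have -> : forall a b, a - b / (c * c) = - ((b - c * c * a) / (c * c)) by move=> a b; field; lra.
  rewrite Rabs_Ropp /Rdiv Rabs_mult Rabs_inv (Rabs_pos_eq (c * c)); last lra.
  apply: (Rmult_le_reg_r (c * c)) => //; rewrite Rmult_assoc Rinv_l ?Rmult_1_r; last lra.
  apply: Rle_trans H _; apply: Rmult_le_compat_r; first lra.
  rewrite /E; apply: Rmult_le_compat_r; first nra.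
  by apply: Rmult_le_compat_l; [lra | apply: HS].
rewrite Rplus_comm -sumR_opp -sumR_add.
rewrite (sumR_ext (G := fun l => lam l * (sumR (fun j => sg j l * sumR (fun i => sg i l * D2 j i x))
   - (phi (vadd z (vscale c (col sg l))) + phi (vadd z (vscale (- c) (col sg l))) - 2 * phi z)
     / (c * c)))); last by move=> l; ring.
apply: Rle_trans (Rabs_sumR_le _) _; rewrite -HC -sumR_mulr; apply: sumR_le => l.
rewrite Rabs_mult Rabs_pos_eq //; exact: Rmult_le_compat_l (Hl l).
Qed.

End Taylor.

Lemma Ck_cont d m (U : vec d -> Prop) u : Ck m U u -> cont_on U u.
Proof. by case: m => [[]|m []]. Qed.

Lemma Ck_second_partials d m (U : vec d -> Prop) u : Ck m.+2 U u ->
  exists (Du : 'I_d -> vec d -> R) (D2 : 'I_d -> 'I_d -> vec d -> R),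
    (forall j y, U y -> has_partial u y j (Du j y)) /\ (forall j, cont_on U (Du j)) /\
    (forall j i y, U y -> has_partial (Du j) y i (D2 j i y)) /\ (forall j i, cont_on U (D2 j i)).
Proof.
case=> _ [Du [Hp HDu]].
pose D2 j := epsilon (inhabits (fun (_ : 'I_d) (_ : vec d) => 0))
  (fun D => (forall i y, U y -> has_partial (Du j) y i (D i y)) /\ forall i, Ck m U (D i)).
have HD2 j : (forall i y, U y -> has_partial (Du j) y i (D2 j i y)) /\ forall i, Ck m U (D2 j i).
  by case: (HDu j) => _ H; apply: (epsilon_spec _ _ H).
exists Du, D2; split => //; split; first by move=> j; case: (HDu j).
split; first by move=> j; case: (HD2 j).
by move=> j i; case: (HD2 j) => _ H; apply: (Ck_cont (H i)).
Qed.

Lemma hessian_of_partials d (Om : vec d -> Prop) phi (Du : 'I_d -> vec d -> R)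
    (D2 : 'I_d -> 'I_d -> vec d -> R) x r :
  0 < r -> (forall y, vdist y x < r -> Om y) ->
  (forall j y, Om y -> has_partial phi y j (Du j y)) ->
  (forall j i y, Om y -> has_partial (Du j) y i (D2 j i y)) ->
  hessian phi x = fun i j => D2 j i x.
Proof.
move=> Hr Hball Hp1 Hp2.
have Hx : Om x by apply: Hball; rewrite vdist_refl.
have ex : exists A : mat d, forall i j, is_second_partial phi x i j (A i j).
  exists (fun i j => D2 j i x) => i j; exists r; split => //; exists (Du j); split => //.
    by move=> y Hy; apply: Hp1; apply: Hball.
  exact: Hp2.
have H := epsilon_spec (inhabits (fun _ _ => 0)) _ ex.
apply: functional_extensionality => i; apply: functional_extensionality => j.
case: (H i j) => r' [Hr' [g [Hg Hgi]]].
have Hrr : 0 < Rmin r' r by apply: Rmin_pos.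
apply: (derivable_pt_lim_local_unique Hrr _ Hgi (Hp2 j i x Hx)) => t Ht.
rewrite -(vdist_axis x i t) in Ht; apply: (uniqueness_limite _ 0).
  by apply: Hg; apply: Rlt_le_trans Ht (Rmin_l _ _).
by apply: Hp1; apply: Hball; apply: Rlt_le_trans Ht (Rmin_r _ _).
Qed.

(** * Suprema and determinants *)

Lemma Rsup_lub (P : R -> Prop) : (exists v, P v) -> (exists M, forall v, P v -> v <= M) ->
  is_lub P (Rsup P).
Proof.
move=> [v Hv] [M HM].
have [s Hs] := completeness P (ex_intro _ M HM) (ex_intro _ v Hv).
by apply: epsilon_spec; exists s.
Qed.

Lemma Rsup_shift_close d (F : mat d -> vec d -> Prop) (L : mat d -> mat d -> vec d -> R)
   (T : mat d -> R) a Err :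
  (exists B : mat d, S1 B) ->
  (forall B, S1 B -> exists sg lam, F sg lam /\ ctrl_prod sg lam = B) ->
  (exists M, forall B, S1 B -> T B <= M) ->
  (forall B sg lam, S1 B -> F sg lam -> ctrl_prod sg lam = B ->
     Rabs (L B sg lam - (T B + a)) <= Err) ->
  Rabs (Rsup (fun v => exists B sg lam, S1 B /\ F sg lam /\ ctrl_prod sg lam = B /\ v = L B sg lam)
        - (Rsup (fun v => exists B, S1 B /\ v = T B) + a)) <= Err.
Proof.
move=> [B0 HB0] Hsurj [M HM] Hclose.
set P2 := fun v => exists B, S1 B /\ v = T B.
set P1 := fun v => exists B sg lam, S1 B /\ F sg lam /\ ctrl_prod sg lam = B /\ v = L B sg lam.
have [ub2 least2] : is_lub P2 (Rsup P2).
  apply: Rsup_lub; first by exists (T B0), B0.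
  by exists M => v [B [HB ->]]; apply: HM.
have [ub1 least1] : is_lub P1 (Rsup P1).
  apply: Rsup_lub.
    by case: (Hsurj B0 HB0) => sg [lam [Hf Hc]]; exists (L B0 sg lam), B0, sg, lam.
  exists (M + a + Err) => v [B [sg [lam [HB [Hf [Hc ->]]]]]].
  by have := Hclose B sg lam HB Hf Hc; have := HM B HB; split_Rabs; lra.
have up : Rsup P1 <= Rsup P2 + a + Err.
  apply: least1 => v [B [sg [lam [HB [Hf [Hc ->]]]]]].
  have := Hclose B sg lam HB Hf Hc; have : T B <= Rsup P2 by apply: ub2; exists B.
  split_Rabs; lra.
have lo : Rsup P2 <= Rsup P1 - a + Err.
  apply: least2 => v [B [HB ->]]; case: (Hsurj B HB) => sg [lam [Hf Hc]].
  have := Hclose B sg lam HB Hf Hc.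
  have : L B sg lam <= Rsup P1 by apply: ub1; exists B, sg, lam.
  split_Rabs; lra.
split_Rabs; lra.
Qed.

Lemma Rabs_bigprod_le (I : Type) (r : seq I) (G : I -> R) b : 0 <= b ->
  (forall i, Rabs (G i) <= b) -> Rabs (\big[Rmult/1]_(i <- r) G i) <= b ^ size r.
Proof.
move=> Hb H; elim: r => [|a r IH]; first by rewrite big_nil Rabs_R1 /=; lra.
rewrite big_cons Rabs_mult /=; apply: Rmult_le_compat => //; exact: Rabs_pos.
Qed.

Lemma Rabs_bigsum_le (I : Type) (r : seq I) (G : I -> R) b :
  (forall i, Rabs (G i) <= b) -> Rabs (\big[Rplus/0]_(i <- r) G i) <= INR (size r) * b.
Proof.
move=> H; elim: r => [|a r IH]; first by rewrite big_nil Rabs_R0 /=; lra.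
rewrite big_cons (_ : size (a :: r) = (size r).+1) // S_INR; apply: Rle_trans (Rabs_triang _ _) _; have := H a; lra.
Qed.

Lemma Rabs_det_le d (B : mat d) b : 0 <= b -> (forall i j, Rabs (B i j) <= b) ->
  Rabs (det B) <= INR (size (index_enum {perm 'I_d})) * b ^ size (index_enum 'I_d).
Proof.
move=> Hb H; apply: Rabs_bigsum_le => s; rewrite Rabs_mult.
by case: (odd_perm s); rewrite ?Rabs_Ropp Rabs_R1 Rmult_1_l; apply: Rabs_bigprod_le.
Qed.

Lemma root_d_le d x : (1 <= d)%coq_nat -> 0 <= root_d d x <= Rmax 1 x.
Proof.
move=> Hd; rewrite /root_d; case: (Rlt_dec 0 x) => Hx /=; last by have := Rmax_l 1 x; lra.
have HdR : 1 <= INR d by exact: (le_INR 1).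
have Hinv : 0 < / INR d <= 1.
  by split; [apply: Rinv_0_lt_compat; lra | rewrite -Rinv_1; apply: Rinv_le_contravar; lra].
split; first by apply: Rlt_le; apply: exp_pos.
case: (Rle_dec x 1) => H1.
  have : Rpower x (/ INR d) <= Rpower 1 (/ INR d) by apply: Rle_Rpower_l; lra.
  by rewrite {2}/Rpower ln_1 Rmult_0_r exp_0; have := Rmax_l 1 x; lra.
apply: Rle_trans (Rmax_r 1 x); rewrite -{2}(Rpower_1 x Hx).
by apply: Rle_Rpower; lra.
Qed.

Lemma ctrl_prod_entry_le d (sg : mat d) (lam : vec d) K :
  (forall i j, Rabs (sg i j) <= K) -> (forall i, Rabs (lam i) <= K) ->
  forall i j, Rabs (ctrl_prod sg lam i j) <= INR d * (K * K * K).
Proof.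
move=> Hs Hl i j; rewrite /ctrl_prod -sumR_const.
apply: Rle_trans (Rabs_sumR_le _) _; apply: sumR_le => l; rewrite !Rabs_mult.
have := Rabs_pos (sg i l); have := Rabs_pos (lam l); have := Rabs_pos (sg j l).
have := Hs i l; have := Hl l; have := Hs j l => *.
apply: Rmult_le_compat; try apply: Rmult_le_compat; try nra; try apply: Rmult_le_pos; lra.
Qed.

Lemma controls_sigma_bounded d (F : mat d -> vec d -> Prop) C : controls_ok F C ->
  exists K, 0 < K /\ forall sg lam, F sg lam -> forall i j, Rabs (sg i j) <= K.
Proof.
case=> [[K HK] _]; exists (Rabs K + 1); split; first by have := Rabs_pos K; lra.
move=> sg lam HF i j; case: (HK _ _ HF) => H _.
by have := H i j; have := Rle_abs K; lra.
Qed.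

Lemma S1_entries_bounded d (F : mat d -> vec d -> Prop) C : controls_ok F C ->
  exists b, 0 <= b /\ forall B : mat d, S1 B -> forall i j, Rabs (B i j) <= b.
Proof.
case=> [[K HK] [_ [_ [Hsurj _]]]].
have HK0 := Rabs_pos K; have Hd := pos_INR d.
exists (INR d * (Rabs K * Rabs K * Rabs K)); split; first by apply: Rmult_le_pos; nra.
move=> B HB; case: (Hsurj B HB) => sg [lam [Hf <-]]; case: (HK _ _ Hf) => Hsg Hlam.
by apply: ctrl_prod_entry_le => [i j | i]; apply: Rle_trans (Rle_abs K).
Qed.

Lemma S1_root_det_bounded d (F : mat d -> vec d -> Prop) C : (1 <= d)%coq_nat -> controls_ok F C ->
  exists Rb, forall B : mat d, S1 B -> 0 <= root_d d (det B) <= Rb.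
Proof.
move=> Hd /S1_entries_bounded [b [Hb HB]].
exists (Rmax 1 (INR (size (index_enum {perm 'I_d})) * b ^ size (index_enum 'I_d))) => B HB1.
case: (root_d_le (det B) Hd) => H0 H1; split => //; apply: Rle_trans H1 _.
apply: Rmax_lub; first exact: Rmax_l.
apply: Rle_trans (Rmax_r 1 _); apply: Rle_trans (Rle_abs _) _.
exact: Rabs_det_le (HB B HB1).
Qed.

Lemma Hcont_terms_bounded d (F : mat d -> vec d -> Prop) C (A : mat d) fv :
  (1 <= d)%coq_nat -> controls_ok F C ->
  exists M, forall B : mat d, S1 B -> - frob B A + fv * root_d d (det B) <= M.
Proof.
move=> Hd HF; case: (S1_entries_bounded HF) => b [Hb HB].
case: (S1_root_det_bounded Hd HF) => Rb HRb.
exists (sumR (fun i => sumR (fun j => b * Rabs (A i j))) + Rabs fv * Rb) => B HB1.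
have H1 : Rabs (frob B A) <= sumR (fun i => sumR (fun j => b * Rabs (A i j))).
  apply: Rle_trans (Rabs_sumR_le _) _; apply: sumR_le => i.
  apply: Rle_trans (Rabs_sumR_le _) _; apply: sumR_le => j.
  rewrite Rabs_mult; apply: Rmult_le_compat_r; [exact: Rabs_pos | exact: HB].
have H2 : fv * root_d d (det B) <= Rabs fv * Rb.
  apply: Rle_trans (Rle_abs _) _; rewrite Rabs_mult.
  case: (HRb B HB1) => ? ?; rewrite (Rabs_pos_eq (root_d d (det B))) //.
  by apply: Rmult_le_compat_l => //; apply: Rabs_pos.
have := Rle_abs (- frob B A); rewrite Rabs_Ropp; lra.
Qed.

Lemma S1_nonempty d : (1 <= d)%coq_nat -> exists B : mat d, S1 B.
Proof.
move=> Hd; have HdR : 1 <= INR d by exact: (le_INR 1).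
exists (fun _ _ => / INR d); split; [split => // v|].
  rewrite (sumR_ext (G := fun i => v i * / INR d * sumR v)); last first.
    by move=> i; rewrite -sumR_mull; apply: sumR_ext => j; ring.
  rewrite sumR_mulr sumR_mulr.
  have : 0 < / INR d by apply: Rinv_0_lt_compat; lra.
  have := Rle_0_sqr (sumR v); rewrite /Rsqr; nra.
by rewrite /trace sumR_const; field; lra.
Qed.

(** * Meshes and the discrete operator *)

Section Meshes.
Variable d : nat.
Implicit Types (T : simplex d) (M : mesh d).

Lemma in_simplex_coord T p c : in_simplex T p -> Rabs (p c) <= sumR (fun j => Rabs (T j c)).
Proof.
move=> [mu [Hmu [Hs ->]]].
have Hle j : mu j <= 1 by rewrite -Hs; apply: (sumR_ge_term (F := mu)).
apply: Rle_trans (Rabs_sumR_le (fun i => mu i * T i c)) _; apply: sumR_le => j.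
rewrite Rabs_mult Rabs_pos_eq //; have := Rabs_pos (T j c); have := Hmu j; have := Hle j; nra.
Qed.

Lemma vertex_in_simplex T i : in_simplex T (T i).
Proof.
exists (fun j => if j == i then 1 else 0); split; [|split].
- by move=> j; case: (j == i); lra.
- exact: (sumR_delta i (fun _ => 1)).
- apply: functional_extensionality => c; symmetry.
  rewrite -[RHS](sumR_delta i (fun j => T j c)); apply: sumR_ext => j.
  by case: (j == i); ring.
Qed.

Lemma vdist_le_diam T p q : in_simplex T p -> in_simplex T q -> vdist p q <= diam T.
Proof.
move=> Hp Hq; set b := sumR (fun c => sumR (fun j => Rabs (T j c))).
have Hb : 0 <= b by apply: sumR_ge0 => c; apply: sumR_ge0 => j; apply: Rabs_pos.
suff [ub _] : is_lub (fun r => exists p q, in_simplex T p /\ in_simplex T q /\ r = vdist p q) (diam T).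
  by apply: ub; exists p, q.
apply: Rsup_lub; first by exists (vdist p q), p, q.
exists (INR d * (2 * b)) => v [p' [q' [Hp' [Hq' ->]]]].
apply: vnorm_le_box; first lra.
move=> c; rewrite /vsub.
have Hc : sumR (fun j => Rabs (T j c)) <= b.
  by apply: (sumR_ge_term (F := fun c => sumR (fun j => Rabs (T j c)))) => c';
    apply: sumR_ge0 => j; apply: Rabs_pos.
have := in_simplex_coord c Hp'; have := in_simplex_coord c Hq'.
have := Rabs_triang (p' c) (- q' c); rewrite Rabs_Ropp /Rminus; lra.
Qed.

Lemma diam_bounded M : exists B, 0 <= B /\ forall T, List.In T M -> diam T <= B.
Proof.
elim: M => [|T0 M [B [HB IH]]]; first by exists 0; split; [lra | move=> T].
exists (Rmax (diam T0) B); split; first by apply: Rle_trans (Rmax_r _ _).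
move=> T /= [<- | HT]; first exact: Rmax_l.
by apply: Rle_trans (Rmax_r _ _); apply: IH.
Qed.

Lemma diam_le_meshfun M T y : List.In T M -> in_simplex T y -> diam T <= meshfun M y.
Proof.
move=> HT Hy; case: (diam_bounded M) => B [HB HMB].
suff [ub _] : is_lub (fun r => r = 0 \/ exists T, List.In T M /\ in_simplex T y /\ r = diam T)
                     (meshfun M y) by apply: ub; right; exists T.
apply: Rsup_lub; first by exists 0; left.
by exists B => v [-> | [T' [HT' [_ ->]]]] //; apply: HMB.
Qed.

Lemma diam_le_hmax M T : List.In T M -> diam T <= hmax M.
Proof.
move=> HT; case: (diam_bounded M) => B [HB HMB].
suff [ub _] : is_lub (fun r => r = 0 \/ exists T, List.In T M /\ r = diam T) (hmax M).
  by apply: ub; right; exists T.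
apply: Rsup_lub; first by exists 0; left.
by exists B => v [-> | [T' [HT' ->]]] //; apply: HMB.
Qed.

End Meshes.


Section Scheme.
Variable d : nat.

Lemma frob_ctrl_prod (sg : mat d) (lam : vec d) (A : mat d) :
  frob (ctrl_prod sg lam) A =
  sumR (fun l => lam l * sumR (fun j => sg j l * sumR (fun i => sg i l * A i j))).
Proof.
rewrite /frob /ctrl_prod.
rewrite (sumR_ext (G := fun i => sumR (fun l => sumR (fun j =>
            lam l * (sg j l * (sg i l * A i j)))))); last first.
  move=> i; rewrite sumR_swap; apply: sumR_ext => j.
  by rewrite -sumR_mulr; apply: sumR_ext => l; ring.
rewrite sumR_swap; apply: sumR_ext => l; rewrite sumR_swap -sumR_mull; apply: sumR_ext => j.
by rewrite -!sumR_mull; apply: sumR_ext => i; ring.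
Qed.

Lemma Lint_split (f : vec d -> R) kf s (ph : vec d -> R) xi z (B sg : mat d) lam c C :
  kf z = c -> c <> 0 -> sumR lam = C ->
  Lint f kf (s + xi) (fun w => ph w + xi) z B sg lam =
  - sumR (fun l => lam l * ((ph (vadd z (vscale c (col sg l)))
                            + ph (vadd z (vscale (- c) (col sg l))) - 2 * ph z) / (c * c)))
  + 2 * C * (s - ph z) / (c * c) + f z * root_d d (det B).
Proof.
move=> Hk Hc HC; rewrite /Lint Hk.
have Ev l : vsub z (vscale c (col sg l)) = vadd z (vscale (- c) (col sg l)).
  by apply: functional_extensionality => i; rewrite /vsub /vadd /vscale; ring.
rewrite (sumR_ext (G := fun l => lam l * ((ph (vadd z (vscale c (col sg l)))
     + ph (vadd z (vscale (- c) (col sg l))) - 2 * ph z) / (c * c))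
     + lam l * (2 * (ph z - s) / (c * c)))); last by move=> l; rewrite Ev /=; field.
by rewrite sumR_add sumR_mulr HC; field.
Qed.

(* Linear parts of [ph] interpolate exactly, so only the Taylor remainders at the vertices survive. *)
Lemma barycentric_cancellation (T : simplex d) y mu (u : 'I_d.+1 -> R) H0
   (ph : vec d -> R) (Dp : 'I_d -> R) C c E Rr :
  bary T y mu -> 0 <= C -> c <> 0 ->
  (forall i, Rabs (u i - (H0 + 2 * C * (ph y - ph (T i)) / (c * c))) <= E) ->
  (forall i, Rabs (ph (T i) - ph y - sumR (fun j => (T i j - y j) * Dp j)) <= Rr) ->
  Rabs (sumR (fun i => mu i * u i) - H0) <= E + 2 * C * Rr / (c * c).
Proof.
move=> [Hmu [Hs Hy]] HC Hc0 HE HR; have Hs' : sumR mu = 1 by [].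
pose L i := sumR (fun j => (T i j - y j) * Dp j).
have HL : sumR (fun i => mu i * L i) = 0.
  rewrite /L (sumR_ext (G := fun i => sumR (fun j => mu i * ((T i j - y j) * Dp j))));
    last by move=> i; rewrite sumR_mull.
  rewrite sumR_swap (sumR_ext (G := fun j : 'I_d => 0 * Dp j)) ?sumR_mull ?Rmult_0_l // => j.
  rewrite (sumR_ext (G := fun i => (mu i * T i j - mu i * y j) * Dp j)); last by move=> i; ring.
  rewrite sumR_mulr sumR_sub sumR_mulr Hs'.
  by rewrite (_ : sumR (fun i => mu i * T i j) = y j) ?Hy //; ring.
have Hcc : 0 < c * c by have := Rsqr_pos_lt c Hc0; rewrite /Rsqr.
have HK : 0 <= 2 * C / (c * c) by apply: Rmult_le_pos; [lra | apply/Rlt_le/Rinv_0_lt_compat].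
have -> : sumR (fun i => mu i * u i) - H0 =
   sumR (fun i => mu i * (u i - (H0 + 2 * C * (ph y - ph (T i)) / (c * c))))
   - 2 * C / (c * c) * sumR (fun i => mu i * (ph (T i) - ph y - L i)).
  symmetry; rewrite -sumR_mull -sumR_sub.
  rewrite (sumR_ext (G := fun i => (mu i * u i + mu i * (- H0)) + 2 * C / (c * c) * (mu i * L i)));
    last by move=> i; field; lra.
  by rewrite !sumR_add sumR_mull HL sumR_mulr Hs'; ring.
have Hconv (w : 'I_d.+1 -> R) b : (forall i, Rabs (w i) <= b) -> Rabs (sumR (fun i => mu i * w i)) <= b.
  move=> Hw; apply: Rle_trans (Rabs_sumR_le _) _; rewrite -[X in _ <= X]Rmult_1_l -Hs' -sumR_mulr.
  by apply: sumR_le => i; rewrite Rabs_mult Rabs_pos_eq //; apply: Rmult_le_compat_l.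
apply: Rle_trans (Rabs_triang _ _) _; rewrite Rabs_Ropp Rabs_mult (Rabs_pos_eq (2 * C / (c * c))) //.
rewrite (_ : 2 * C * Rr / (c * c) = 2 * C / (c * c) * Rr); last by field; lra.
apply: Rplus_le_compat; first exact: Hconv.
by apply: Rmult_le_compat_l => //; apply: Hconv.
Qed.

End Scheme.

Lemma small_tolerance A eps : 0 < eps -> exists t, 0 < t <= 1 /\ A * t <= eps.
Proof.
move=> Heps; have HA := Rabs_pos A.
have Hq : 0 < eps / (Rabs A + 1) by apply: Rdiv_lt_0_compat; lra.
exists (Rmin 1 (eps / (Rabs A + 1))); split.
  by split; [apply: Rmin_pos; lra | apply: Rmin_l].
have Ht := Rmin_r 1 (eps / (Rabs A + 1)); have Ht0 := Rmin_pos _ _ Rlt_0_1 Hq.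
have : (Rabs A + 1) * Rmin 1 (eps / (Rabs A + 1)) <= eps.
  rewrite Rmult_comm; apply: (Rmult_le_reg_r (/ (Rabs A + 1))); first by apply: Rinv_0_lt_compat; lra.
  by rewrite Rmult_assoc Rinv_r ?Rmult_1_r; lra.
have := Rle_abs A; nra.
Qed.

Lemma in_box_Omega_i d (Om : vec d -> Prop) x r rho i z : (1 <= d)%coq_nat -> 0 < r -> 0 <= rho ->
  (forall w, vdist w x < r -> Om w) -> INR d * rho <= r / 2 -> / INR i < r / (2 * INR d) ->
  in_box x rho z -> Omega_i Om i z.
Proof.
move=> Hd Hr Hrho Hball Hrho2 Hi Hz; have HdR : 1 <= INR d by exact: (le_INR 1).
have Hzx := in_box_vdist Hrho Hz.
split; first by apply: Hball; lra.
exists (r / (2 * INR d)); split => // b [_ Hb].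
have Hbx : r <= vdist b x by case: (Rle_lt_dec r (vdist b x)) => // H; case: Hb; apply: Hball.
have := in_box_vdist (Rplus_le_le_0_compat _ _ Hrho (vnorm_ge0 _))
  (in_box_trans Hz (vdist_in_box (Req_le _ _ (vdist_sym b z)))).
have -> : r / (2 * INR d) = (r / INR d) / 2 by field; lra.
move=> H; apply: (Rmult_le_reg_l (INR d)); first lra.
rewrite (_ : INR d * (r / INR d / 2) = r / 2); last by field; lra.
rewrite /vdist in H Hbx *; nra.
Qed.

(** * Consistency *)

Lemma Sscheme_over_hmax d f g F (M : mesh d) k y s (ph : vec d -> R) :
  (forall T, List.In T M -> 0 < diam T) -> Om_bar_h M y ->
  exists T mu, List.In T M /\ bary T y mu /\
    Sscheme f g F M k y s ph / hmax M = sumR (fun i => mu i * Hnode f g F M k s ph (T i)).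
Proof.
move=> Hdiam [T0 [HT0 [mu0 Hmu0]]]; rewrite /Sscheme /Hh /interp.
set u := Hnode f g F M k s ph.
have Hex : exists w, exists T mu, List.In T M /\ bary T y mu /\
    w = \big[Rplus/0]_(i < d.+1) (mu i * u (T i)).
  by exists (\big[Rplus/0]_(i < d.+1) (mu0 i * u (T0 i))), T0, mu0.
case: (epsilon_spec (inhabits 0) _ Hex) => T [mu [HT [Hmu ->]]].
exists T, mu; split => //; split => //.
have := Rlt_le_trans _ _ _ (Hdiam T HT) (diam_le_hmax HT).
by rewrite /sumR => H; field; lra.
Qed.

Section Consistency.
Variables (d : nat) (Om : vec d -> Prop) (f g : vec d -> R) (F : mat d -> vec d -> Prop) (C : R).
Variables (Ms : nat -> mesh d) (k : nat -> vec d -> R) (x : vec d) (phi : vec d -> R).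
Variables (Du : 'I_d -> vec d -> R) (D2 : 'I_d -> 'I_d -> vec d -> R).
Hypothesis d_pos : (1 <= d)%coq_nat.
Hypothesis Om_open : is_open Om.
Hypothesis phi_partial : forall j y, Om y -> has_partial phi y j (Du j y).
Hypothesis Du_cont : forall j, cont_on Om (Du j).
Hypothesis Du_partial : forall j i y, Om y -> has_partial (Du j) y i (D2 j i y).
Hypothesis D2_cont : forall j i, cont_on Om (D2 j i).
Hypothesis ctrl : controls_ok F C.

Let H_at_x := Hcont (fun i j => D2 j i x) (f x).

Lemma node_consistency n z c s xi eta Kp Rb :
  0 <= Kp -> (forall sg lam, F sg lam -> forall i j, Rabs (sg i j) <= Kp) ->
  (forall B : mat d, S1 B -> 0 <= root_d d (det B) <= Rb) ->
  Om_h (Ms n) z -> k n z = c -> 0 < c -> 0 <= eta ->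
  (forall w, in_box z (c * Kp) w -> Om w /\ forall j i, Rabs (D2 j i w - D2 j i x) <= eta) ->
  Rabs (f z - f x) <= eta ->
  Rabs (Hnode f g F (Ms n) (k n) (s + xi) (fun w => phi w + xi) z
        - (H_at_x + 2 * C * (s - phi z) / (c * c)))
   <= C * (2 * (INR d * Kp) * ((INR d * Kp) * eta)) + eta * Rb.
Proof.
move=> HKp Hsg Hroot Hz Hk Hc Heta Hbox Hf.
rewrite /Hnode; case: (excluded_middle_informative (Om_h (Ms n) z)) => [? | /(_ Hz) []].
case: (ctrl) => [_ [_ [_ [Hsurj [_ [HC Hlam]]]]]].
apply: (Rsup_shift_close (T := fun B => - frob B (fun i j => D2 j i x) + f x * root_d d (det B)))
  => //; [exact: S1_nonempty | exact: Hcont_terms_bounded ctrl | move=> B sg lam HB HF HsgB].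
case: (Hlam _ _ HF) => Hlam0 HlamC.
rewrite (Lint_split f s phi xi B sg Hk (ltac:(lra) : c <> 0) HlamC) -HsgB frob_ctrl_prod HsgB.
have Hpts l t : -c <= t <= c -> Om (vadd z (vscale t (col sg l))) /\
    forall j i, Rabs (D2 j i (vadd z (vscale t (col sg l))) - D2 j i x) <= eta.
  move=> Ht; apply: Hbox => i; rewrite /vadd /vscale /col.
  rewrite (_ : z i + t * sg i l - z i = t * sg i l); last ring.
  rewrite Rabs_mult; apply: Rmult_le_compat; try apply: Rabs_pos; last exact: Hsg HF i l.
  by split_Rabs; lra.
have Hst := stencil_consistency Om_open phi_partial Du_cont Du_partial D2_cont
  Hc Heta HKp (Hsg _ _ HF) Hlam0 HlamC Hpts.
case: (Hroot B HB) => Hr0 Hr1.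
have Hfr : Rabs ((f z - f x) * root_d d (det B)) <= eta * Rb.
  rewrite Rabs_mult (Rabs_pos_eq (root_d d (det B))) //.
  by apply: Rmult_le_compat => //; apply: Rabs_pos.
move: Hst Hfr; set SD := sumR _; set SQ := sumR _ => Hst Hfr.
have -> : - SD + 2 * C * (s - phi z) / (c * c) + f z * root_d d (det B)
  - (- SQ + f x * root_d d (det B) + 2 * C * (s - phi z) / (c * c))
  = (- SD + SQ) + (f z - f x) * root_d d (det B) by ring.
by apply: Rle_trans (Rabs_triang _ _) _; lra.
Qed.

Lemma element_consistency n (T : simplex d) y mu c xi t rho Kp Rb M :
  0 <= Kp -> (forall sg lam, F sg lam -> forall i j, Rabs (sg i j) <= Kp) ->
  (forall B : mat d, S1 B -> 0 <= root_d d (det B) <= Rb) ->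
  0 <= M -> (forall j i, Rabs (D2 j i x) + 1 <= M) -> 0 < c -> 0 <= t <= 1 ->
  (forall z, in_box x rho z -> Om z /\ Om_h (Ms n) z /\ k n z = c /\
     (forall j i, Rabs (D2 j i z - D2 j i x) <= t) /\ Rabs (f z - f x) <= t) ->
  bary T y mu -> in_box x (rho - c * Kp) y -> (forall i, in_box x (rho - c * Kp) (T i)) ->
  (forall i, vdist (T i) y <= t * c) ->
  Rabs (sumR (fun i => mu i * Hnode f g F (Ms n) (k n) (phi y + xi) (fun w => phi w + xi) (T i))
        - H_at_x) <= (2 * C * (INR d * Kp) ^ 2 + Rb + 2 * C * M * INR d ^ 2) * t.
Proof.
move=> HKp Hsg Hroot HM0 HM Hc Ht Hgood Hmu Hy HT HTy.
case: (ctrl) => [_ [_ [_ [_ [_ [HC _]]]]]].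
have HcK : 0 <= c * Kp by nra.
have Hin z : in_box x (rho - c * Kp) z -> in_box x rho z.
  by move=> Hz i; have := Hz i; lra.
have Hnode i : Rabs (Hnode f g F (Ms n) (k n) (phi y + xi) (fun w => phi w + xi) (T i)
    - (H_at_x + 2 * C * (phi y - phi (T i)) / (c * c)))
    <= C * (2 * (INR d * Kp) * ((INR d * Kp) * t)) + t * Rb.
  case: (Hgood _ (Hin _ (HT i))) => _ [Hh [Hk [_ Hf]]].
  apply: node_consistency => //; first lra.
  move=> w Hw; have Hw' : in_box x rho w.
    by rewrite -(Rplus_0_r rho) -(Rplus_opp_l (c * Kp)) -Rplus_assoc; apply: in_box_trans (HT i) Hw.
  by case: (Hgood w Hw') => Hw1 [_ [_ [Hw2 _]]].
have Htaylor i : Rabs (phi (T i) - phi y - sumR (fun j => (T i j - y j) * Du j y))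
    <= M * ((INR d * (t * c)) * (INR d * (t * c))).
  have Hseg s : 0 <= s <= 1 -> in_box x rho (vadd y (vscale s (vsub (T i) y))).
    by move=> Hs; apply: Hin; apply: in_box_segment.
  have HOm s : 0 <= s <= 1 -> Om (vadd y (vscale s (vsub (T i) y))).
    by move=> Hs; case: (Hgood _ (Hseg s Hs)).
  have HD2 j i' s : 0 <= s <= 1 -> Rabs (D2 j i' (vadd y (vscale s (vsub (T i) y)))) <= M.
    move=> Hs; case: (Hgood _ (Hseg s Hs)) => _ [_ [_ [HD _]]].
    by have := HD j i'; have := HM j i'; split_Rabs; lra.
  have := taylor1_estimate Om_open phi_partial Du_cont Du_partial D2_cont HM0 HOm HD2.
  have -> : vadd y (vsub (T i) y) = T i.
    by apply: functional_extensionality => c'; rewrite /vadd /vsub; ring.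
  move=> H.
  apply: Rle_trans H _; apply: Rmult_le_compat_l => //.
  have HS : sumR (fun c' => Rabs (vsub (T i) y c')) <= INR d * (t * c).
    apply: Rle_trans (sumR_abs_le_vnorm _) _.
    by apply: Rmult_le_compat_l; [apply: pos_INR | apply: HTy].
  have HS0 : 0 <= sumR (fun c' => Rabs (vsub (T i) y c')) by apply: sumR_ge0 => c'; apply: Rabs_pos.
  by apply: Rmult_le_compat.
apply: Rle_trans (barycentric_cancellation Hmu (Rlt_le _ _ HC) (ltac:(lra) : c <> 0) Hnode Htaylor) _.
have -> : 2 * C * (M * (INR d * (t * c) * (INR d * (t * c)))) / (c * c)
          = 2 * C * M * INR d ^ 2 * (t * t) by field; lra.
have : 2 * C * M * INR d ^ 2 * (t * t) <= 2 * C * M * INR d ^ 2 * t.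
  apply: Rmult_le_compat_l; last nra.
  by have := pos_INR d; have := Rmult_le_pos _ _ (Rlt_le _ _ HC) HM0; nra.
rewrite /pow; lra.
Qed.

Hypothesis f_cont : cont_on Om f.
Hypothesis x_in : Om x.
Hypothesis diam_pos : forall n T, List.In T (Ms n) -> 0 < diam T.
Hypothesis mesh_exhausts : forall i, (1 <= i)%coq_nat -> exists h', 0 < h' /\
  forall n, hmax (Ms n) < h' -> forall y, Omega_i Om i y -> Om_h (Ms n) y.
Hypothesis k_pos : forall n y, Om y -> 0 < k n y.
Hypothesis K1 : forall i, (1 <= i)%coq_nat -> forall eps, 0 < eps -> exists h', 0 < h' /\
  forall n, hmax (Ms n) < h' -> forall y, Omega_i Om i y -> meshfun (Ms n) y / k n y <= eps.
Hypothesis K2 : forall i, (1 <= i)%coq_nat -> exists h', 0 < h' /\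
  forall n, hmax (Ms n) < h' -> exists c, forall y, Omega_i Om i y -> k n y = c.
Hypothesis K3 : forall eps, 0 < eps -> exists h', 0 < h' /\
  forall n, hmax (Ms n) < h' -> forall y, Om y -> k n y <= eps.

Lemma box_near_x t : 0 < t -> exists rho i, 0 < rho /\ (1 <= i)%coq_nat /\
  forall z, in_box x rho z -> Omega_i Om i z /\
    (forall j i, Rabs (D2 j i z - D2 j i x) <= t) /\ Rabs (f z - f x) <= t.
Proof.
move=> Ht; have HdR : 1 <= INR d by exact: (le_INR 1).
pose u (o : option ('I_d * 'I_d)) := if o is Some (j, i) then D2 j i else f.
have Hu o : cont_on Om (u o) by case: o => [[j i]|]; [apply: D2_cont | apply: f_cont].
case: (cont_on_near Om_open x_in Hu Ht) => r [Hr Hnear].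
set rho := r / (2 * INR d).
have Hrho : 0 < rho by apply: Rdiv_lt_0_compat; lra.
case: (INR_unbounded (/ rho)) => n0 Hn0.
have Hi : / INR n0.+1 < rho.
  rewrite -[rho]Rinv_inv; apply: Rinv_lt_contravar; rewrite S_INR; last lra.
  by apply: Rmult_lt_0_compat; [apply: Rinv_0_lt_compat | have := pos_INR n0; lra].
have Hdrho : INR d * rho = r / 2 by rewrite /rho; field; lra.
exists rho, n0.+1; split => //; split => [|z Hz]; first lia.
have Hzx : vdist z x < r by have := in_box_vdist (Rlt_le _ _ Hrho) Hz; lra.
split; first apply: (in_box_Omega_i d_pos Hr (Rlt_le _ _ Hrho) _ (Req_le _ _ Hdrho) Hi Hz).
  by move=> w Hw; case: (Hnear w Hw).
case: (Hnear z Hzx) => _ H; split; last exact: (H None).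
by move=> j i; apply: (H (Some (j, i))).
Qed.

Lemma small_mesh_regime i t rho Kp : (1 <= i)%coq_nat -> 0 < t -> 0 < rho -> 0 < Kp ->
  exists del, 0 < del /\ del <= rho / 3 /\ forall n, hmax (Ms n) < del ->
    (exists c, forall z, Omega_i Om i z -> k n z = c) /\
    forall z, Omega_i Om i z ->
      Om_h (Ms n) z /\ meshfun (Ms n) z / k n z <= t /\ k n z * Kp <= rho / 3.
Proof.
move=> Hi Ht Hrho HKp.
case: (mesh_exhausts Hi) => ha [Hha Ha]; case: (K1 Hi Ht) => hb [Hhb Hb].
case: (K2 Hi) => hc [Hhc Hc].
have Hr3 : 0 < rho / (3 * Kp) by apply: Rdiv_lt_0_compat; lra.
case: (K3 Hr3) => hd [Hhd Hd].
set del := Rmin (Rmin ha hb) (Rmin (Rmin hc hd) (rho / 3)).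
have Hmin a b : Rmin a b <= a /\ Rmin a b <= b by split; [apply: Rmin_l | apply: Rmin_r].
case: (Hmin ha hb) (Hmin hc hd) (Hmin (Rmin ha hb) (Rmin (Rmin hc hd) (rho / 3)))
  (Hmin (Rmin hc hd) (rho / 3)) => ? ? [? ?] [? ?] [? ?].
exists del; split; first by repeat apply: Rmin_pos; lra.
split; first by rewrite /del; lra.
move=> n Hn; split; first by apply: Hc; rewrite /del in Hn; lra.
move=> z Hz; split; first by apply: (Ha n) => //; rewrite /del in Hn; lra.
split; first by apply: (Hb n) => //; rewrite /del in Hn; lra.
have Hk : k n z <= rho / (3 * Kp) by apply: (Hd n); [rewrite /del in Hn; lra | case: Hz].
have -> : rho / 3 = rho / (3 * Kp) * Kp by field; lra.
by apply: Rmult_le_compat_r; lra.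
Qed.

Lemma scheme_consistency eps : 0 < eps -> exists del, 0 < del /\ forall n y xi,
  hmax (Ms n) < del -> vdist y x < del ->
  Rabs (Sscheme f g F (Ms n) (k n) y (phi y + xi) (fun z => phi z + xi) / hmax (Ms n) - H_at_x) <= eps.
Proof.
move=> Heps; case: (controls_sigma_bounded ctrl) => Kp [HKp Hsg].
case: (S1_root_det_bounded d_pos ctrl) => Rb HRb.
case: (matrix_abs_bounded (fun j i => D2 j i x)) => M [HM0 HM].
case: (small_tolerance (2 * C * (INR d * Kp) ^ 2 + Rb + 2 * C * M * INR d ^ 2) Heps)
  => t [Ht HAt].
case: (box_near_x (proj1 Ht)) => rho [i [Hrho [Hi Hbox]]].
case: (small_mesh_regime Hi (proj1 Ht) Hrho HKp) => del [Hdel [Hdel3 Hreg]].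
exists del; split => // n y xi Hn Hyx; case: (Hreg n Hn) => [[c Hc] Hreg_n].
have Hy : in_box x (rho / 3) y by apply: vdist_in_box; lra.
have Hyr : in_box x rho y by apply: (in_box_le _ Hy); lra.
have Hyi : Omega_i Om i y by case: (Hbox y Hyr).
case: (Hreg_n y Hyi); rewrite (Hc y Hyi) => Hyh [Hmf HcKp].
have Hc0 : 0 < c by rewrite -(Hc y Hyi); apply: k_pos; case: Hyi.
have Hybar : Om_bar_h (Ms n) y by case: Hyh => r [Hr Hball]; apply: Hball; rewrite vdist_refl.
case: (Sscheme_over_hmax f g F (k n) (phi y + xi) (fun z => phi z + xi) (diam_pos (n := n)) Hybar)
  => T [mu [HT [Hmu ->]]].
have HTy j : vdist (T j) y <= meshfun (Ms n) y.
  apply: Rle_trans (vdist_le_diam (vertex_in_simplex T j) (ex_intro _ mu Hmu)) _.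
  by apply: diam_le_meshfun => //; exists mu.
have HTy_h j : vdist (T j) y <= hmax (Ms n).
  apply: Rle_trans (vdist_le_diam (vertex_in_simplex T j) (ex_intro _ mu Hmu)) _.
  exact: diam_le_hmax.
apply: Rle_trans HAt; apply: (@element_consistency n T y mu c xi t rho Kp Rb M) => //; try lra.
- move=> z Hz; case: (Hbox z Hz) => Hzi [HD Hf]; case: (Hreg_n z Hzi) => Hzh _.
  by split; [case: Hzi | split; [|split; [exact: Hc|]]].
- by apply: in_box_le Hy; lra.
- move=> j; apply: (in_box_le _ (in_box_trans Hy (vdist_in_box (Rle_refl _)))).
  by have := HTy_h j; lra.
- move=> j; apply: Rle_trans (HTy j) _.
  rewrite -(Rmult_1_r (meshfun _ _)) -(Rinv_l c) ?Rmult_assoc; last lra.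
  rewrite -Rmult_assoc; apply: Rmult_le_compat_r; lra.
Qed.

End Consistency.

Theorem lemma6p3 (d : nat) (Om : vec d -> Prop) (f g : vec d -> R)
    (F : mat d -> vec d -> Prop) (C : R)
    (Ms : nat -> mesh d) (k : nat -> vec d -> R) (x : vec d) (phi : vec d -> R) :
  (2 <= d)%coq_nat ->
  is_open Om -> bounded_set Om -> strictly_convex Om ->
  (forall y, Om y -> 0 <= f y) -> bounded_on Om f -> cont_on Om f ->
  bounded_on (bdry Om) g -> cont_on (bdry Om) g ->
  controls_ok F C ->
  (forall n, admissible_mesh Om (Ms n)) -> shape_regular Ms ->
  (forall eps, 0 < eps -> exists N, forall n, (N <= n)%coq_nat -> hmax (Ms n) < eps) ->
  (* the meshes exhaust Omega, which the paper leaves implicit *)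
  (forall i, (1 <= i)%coq_nat -> exists h', 0 < h' /\ forall n, hmax (Ms n) < h' ->
       forall y, Omega_i Om i y -> Om_h (Ms n) y) ->
  (forall n y, Om y -> 0 < k n y) ->
  (forall n y sg lam j, Om_h (Ms n) y -> F sg lam ->
       Om_bar_h (Ms n) (vadd y (vscale (k n y) (col sg j))) /\
       Om_bar_h (Ms n) (vsub y (vscale (k n y) (col sg j)))) ->
  (* (K1) *)
  (forall i, (1 <= i)%coq_nat -> forall eps, 0 < eps -> exists h', 0 < h' /\
       forall n, hmax (Ms n) < h' -> forall y, Omega_i Om i y ->
         meshfun (Ms n) y / k n y <= eps) ->
  (* (K2) *)
  (forall i, (1 <= i)%coq_nat -> exists h', 0 < h' /\ forall n, hmax (Ms n) < h' ->
       exists c, forall y, Omega_i Om i y -> k n y = c) ->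
  (* (K3) *)
  (forall eps, 0 < eps -> exists h', 0 < h' /\ forall n, hmax (Ms n) < h' ->
       forall y, Om y -> k n y <= eps) ->
  Om x -> bounded_on (clos Om) phi -> Ck 4 Om phi ->
  (* limsup <= H(D^2 phi(x), f(x)) *)
  (forall eps, 0 < eps -> exists del, 0 < del /\
     forall n y xi, hmax (Ms n) < del -> clos Om y -> vdist y x < del -> Rabs xi < del ->
       Sscheme f g F (Ms n) (k n) y (phi y + xi) (fun z => phi z + xi) / hmax (Ms n)
         <= Hcont (hessian phi x) (f x) + eps) /\
  (* liminf >= H(D^2 phi(x), f(x)) *)
  (forall eps, 0 < eps -> exists del, 0 < del /\
     forall n y xi, hmax (Ms n) < del -> clos Om y -> vdist y x < del -> Rabs xi < del ->
       Hcont (hessian phi x) (f x) - eps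
         <= Sscheme f g F (Ms n) (k n) y (phi y + xi) (fun z => phi z + xi) / hmax (Ms n)).
Proof.
move=> Hd2 Hop _ _ _ _ Hfc _ _ Hctrl _ Hsr _ Hexh Hk0 _ HK1 HK2 HK3 Hx _ Hck.
have Hd1 : (1 <= d)%coq_nat by lia.
case: (Ck_second_partials Hck) => Du [D2 [Hp1 [Hc1 [Hp2 Hc2]]]].
case: (Hop x Hx) => r [Hr Hball]; rewrite (hessian_of_partials Hr Hball Hp1 Hp2).
have Hdiam n T : List.In T (Ms n) -> 0 < diam T.
  by case: Hsr => c [_ H] HT; case: (H n T HT).
have Hcons := scheme_consistency g Hd1 Hop Hp1 Hc1 Hp2 Hc2 Hctrl Hfc Hx Hdiam Hexh Hk0 HK1 HK2 HK3.
by split=> eps /Hcons [del [Hdel H]]; exists del; split => // n y xi Hn _ Hyx _;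
  have := H n y xi Hn Hyx; split_Rabs; lra.
Qed.
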